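(* Consider the asynchronous $(n,k)$ game on the complete graph with agent set $[n]$ consisting of $n_r$ rejectors, $n_c$ consentors and at least two majority followers, with threshold $n_c<k\le n-n_r$. Let $T=\inf\{t\ge0:\ x_i(t)=x_i(s)\text{ for all } i\in[n]\text{ and all } s\ge t\}$. Then on the event that a decision is never made in finite time (i.e. $\sum_{i\in[n]}x_i(t)<k$ for all $t\ge0$), all majority followers hold opinion $0$ at time $T$.
   Context: Each agent $i\in[n]$ holds an opinion $x_i(t)\in\{0,1\}$ at time $t=0,1,2,\dots$. The social graph is complete: every agent's social neighbors are all the other $n-1$ agents. In the $(n,k)$ game a decision is made at time $t$ if $\sum_{i\in[n]}x_i(t)\ge k$. The game is asynchronous: at each time step a single agent, chosen uniformly at random from $[n]$ (independently of the past), updates its opinion, and all other opinions stay the same. A rejector holds opinion $0$ at all times; a consentor holds opinion $1$ at all times. A majority follower has initial opinion distributed as Bernoulli$(1/2)$ (independently across agents), and when it updates it adopts the majority opinion among its social neighbors (the other $n-1$ agents). *)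

From HB Require Import structures.
From mathcomp Require Import all_boot all_order all_algebra.
From mathcomp Require Import all_classical all_reals all_analysis.
Set Implicit Arguments. Unset Strict Implicit. Unset Printing Implicit Defensive.

Inductive role := Rejector | Consentor | Follower.
Definition is_rej r := if r is Rejector then true else false.
Definition is_con r := if r is Consentor then true else false.
Definition is_fol r := if r is Follower then true else false.

Definition ones n (x : 'I_n -> bool) : nat := #|[pred j | x j]|.

Definition update n (ro : 'I_n -> role) (x : 'I_n -> bool) (i : 'I_n) : bool :=
  match ro i with
  | Rejector => false
  | Consentor => true
  | Follower =>
      let o1 := #|[pred j | (j != i) && x j]| in
      let o0 := #|[pred j | (j != i) && ~~ x j]| in
      if o0 < o1 then true else if o1 < o0 then false else x i
  end.

Definition step n (ro : 'I_n -> role) (x : 'I_n -> bool) (i : 'I_n) : 'I_n -> bool :=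
  fun j => if j == i then update ro x i else x j.

(* Trajectory x(t) given initial configuration x0 and the sequence u of
   updating agents (u t updates between time t and t+1). *)
Fixpoint traj n (ro : 'I_n -> role) (x0 : 'I_n -> bool) (u : nat -> 'I_n) (t : nat)
  : 'I_n -> bool :=
  match t with
  | 0 => x0
  | t'.+1 => step ro (traj ro x0 u t') (u t')
  end.

Definition init n (ro : 'I_n -> role) (b : 'I_n -> bool) : 'I_n -> bool :=
  fun i => match ro i with Rejector => false | Consentor => true | Follower => b i end.

Definition settled n (x : nat -> 'I_n -> bool) (t : nat) : Prop :=
  forall s, t <= s -> forall i, x s i = x t i.

Definition followers_zero_at_T n (ro : 'I_n -> role) (x : nat -> 'I_n -> bool) : Prop :=
  exists T, [/\ settled x T, (forall t, settled x t -> T <= t)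
             & forall i, is_fol (ro i) -> x T i = false].

(* Cylinder event: followers' initial Bernoulli values equal b and the first
   size s updating agents are s. *)
Definition cyl (Om : Type) n (ro : 'I_n -> role) (B : 'I_n -> Om -> bool)
  (U : nat -> Om -> 'I_n) (b : 'I_n -> bool) (s : seq 'I_n) : set Om :=
  [set w | (forall i, is_fol (ro i) -> B i w = b i)
           /\ [seq U t w | t <- iota 0 (size s)] = s].

From HB Require Import structures.
From mathcomp Require Import all_boot all_order all_algebra.
From mathcomp Require Import all_classical all_reals all_analysis.
From mathcomp Require Import zify ring.
Import Order.TTheory GRing.Theory Num.Theory.
Set Implicit Arguments. Unset Strict Implicit. Unset Printing Implicit Defensive.

(* Along any trajectory a majority follower only switches towards the strict
   majority of the other agents, so every effective step pushes the number Y of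
   ones further from n/2: |2Y - n| grows by 2.  Hence the configuration freezes.
   Almost surely every agent keeps being selected (missing a given agent for L
   consecutive steps has probability O(((n-1)/n)^L)), so in the frozen
   configuration every follower is satisfied with its opinion.  Two satisfied
   followers cannot disagree, and if all of them held 1, every non-rejector would
   hold 1 and a decision would be made. *)


Section Dynamics.
Variables (n : nat) (ro : 'I_n -> role).
Implicit Types (x : 'I_n -> bool) (i j : 'I_n).

Definition respects_roles x := init ro x =1 x.

Lemma respects_roles_init b : respects_roles (init ro b).
Proof. by move=> i; rewrite /init; case: (ro i). Qed.

Lemma respects_roles_step x i : respects_roles x -> respects_roles (step ro x i).
Proof.
move=> rx j; rewrite /step /init; case: eqP => [->|_]; last exact: rx.
by rewrite /update; case: (ro i).
Qed.

Definition ones_but x i := #|[pred j | (j != i) && x j]|.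
Definition zeros_but x i := #|[pred j | (j != i) && ~~ x j]|.

Lemma ones_butE x i : ones x = ones_but x i + x i.
Proof. by rewrite /ones (cardD1 i) addnC inE. Qed.

Lemma ones_but_add_zeros_but x i : ones_but x i + zeros_but x i = n.-1.
Proof.
rewrite -[n in n.-1]card_ord -(cardC1 i) -(cardID [pred j | x j] (predC1 i)).
by congr (_ + _); apply: eq_card => j; rewrite !inE; case: (j != i); case: (x j).
Qed.

Lemma ones_but_step x i : ones_but (step ro x i) i = ones_but x i.
Proof. by apply: eq_card => j; rewrite !inE /step; case: eqP. Qed.

Lemma follower_update_neq x i : ro i = Follower ->
  (update ro x i != x i) =
  (if x i then ones_but x i < zeros_but x i else zeros_but x i < ones_but x i).
Proof.
rewrite /update => ->; rewrite -/(ones_but x i) -/(zeros_but x i).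
by case: (x i); case: ltngtP.
Qed.

Lemma update_nonfollower x i :
  respects_roles x -> ~~ is_fol (ro i) -> update ro x i = x i.
Proof. by move=> /(_ i); rewrite /init /update; case: (ro i). Qed.

(* [|2 * ones x - n|]: with truncated subtraction one of the two terms is 0. *)
Definition imbalance x := ((ones x).*2 - n) + (n - (ones x).*2).

Lemma ones_le x : ones x <= n.
Proof. by rewrite /ones -[leqRHS]card_ord max_card. Qed.

Lemma imbalance_le x : imbalance x <= n.
Proof. by have := ones_le x; rewrite /imbalance; lia. Qed.

Lemma step_eq_or_imbalance_lt x i : respects_roles x ->
  step ro x i = x \/ imbalance x < imbalance (step ro x i).
Proof.
move=> rx; have [fixed|switch] := eqVneq (update ro x i) (x i).
  by left; apply/funext => j; rewrite /step; case: eqP => // ->.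
right; have fol : ro i = Follower.
  by move: switch; case ro_i: (ro i) => //; rewrite update_nonfollower ?ro_i ?eqxx.
have flip : update ro x i = ~~ x i by move: switch; case: (update ro x i); case: (x i).
have := ones_but_add_zeros_but x i; have := ltn_ord i.
move: switch; rewrite (follower_update_neq _ fol).
rewrite /imbalance (ones_butE x i) (ones_butE _ i) ones_but_step /step eqxx flip.
by case: (x i) => /= *; lia.
Qed.

Lemma stable_followers_agree x i j : ro i = Follower -> ro j = Follower ->
  update ro x i = x i -> update ro x j = x j -> x i = x j.
Proof.
move=> fi fj fix_i fix_j.
have := follower_update_neq x fi; have := follower_update_neq x fj.
rewrite fix_i fix_j !eqxx => /esym/negbT + /esym/negbT.
have := ones_but_add_zeros_but x i; have := ones_but_add_zeros_but x j.
have := ones_butE x i; have := ones_butE x j; have := ltn_ord i.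
by case: (x i); case: (x j) => //= *; lia.
Qed.

Lemma nonrejectors_le_ones x :
  (forall i, ~~ is_rej (ro i) -> x i) -> n - #|[pred i | is_rej (ro i)]| <= ones x.
Proof.
move=> nonrej; rewrite -[n in n - _]card_ord -(cardC [pred i | is_rej (ro i)]) addKn.
by apply: subset_leq_card; apply/fintype.subsetP => i; rewrite !inE => /nonrej.
Qed.

Lemma stable_followers_false x k : respects_roles x ->
  (forall i, is_fol (ro i) -> update ro x i = x i) ->
  ones x < k -> k <= n - #|[pred i | is_rej (ro i)]| ->
  forall i, is_fol (ro i) -> x i = false.
Proof.
move=> rx stable below_k le_k i fi; apply/negbTE/negP => xi.
suff : n - #|[pred i | is_rej (ro i)]| <= ones x by lia.
apply: nonrejectors_le_ones => j; rewrite -(rx j) /init.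
case fj: (ro j) => //= _; move: fi; case fi: (ro i) => //= _.
by rewrite -(stable_followers_agree fi fj) ?stable ?fi ?fj.
Qed.

End Dynamics.

Lemma eventually_const_of_potential (T : Type) (x : nat -> T) (phi : T -> nat) M :
  (forall t, phi (x t) <= M) ->
  (forall t, x t.+1 = x t \/ phi (x t) < phi (x t.+1)) ->
  exists t0, forall s, t0 <= s -> x s = x t0.
Proof.
move=> bounded grows.
have drift t0 s : t0 <= s -> x s = x t0 \/ phi (x t0) < phi (x s).
  elim: s => [|s IH]; first by rewrite leqn0 => /eqP ->; left.
  rewrite leq_eqVlt => /orP [/eqP <-|/IH [eq_s|lt_s]]; first by left.
    by rewrite -eq_s; exact: grows.
  by right; case: (grows s) => [->|]; [|exact: ltn_trans].
suff gap k t0 : M - phi (x t0) < k -> exists t1, forall s, t1 <= s -> x s = x t1.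
  exact: gap _ 0 (ltnSn _).
elim: k t0 => // k IH t0 ltk.
have [const|] := pselect (forall s, t0 <= s -> x s = x t0); first by exists t0.
move=> /existsNP [s /not_implyP [le_s neq_s]].
have [//|lt_s] := drift t0 s le_s.
by apply: (IH s); have := bounded s; lia.
Qed.

Section Trajectory.
Variables (n : nat) (ro : 'I_n -> role) (b : 'I_n -> bool) (u : nat -> 'I_n).
Let x := traj ro (init ro b) u.

Lemma respects_roles_traj t : respects_roles ro (x t).
Proof.
by elim: t => [|t IH]; [exact: respects_roles_init | exact: respects_roles_step].
Qed.

Lemma traj_settles : exists T, settled x T.
Proof.
have [T const] : exists T, forall s, T <= s -> x s = x T.
  apply: (@eventually_const_of_potential _ x (@imbalance n) n).
    by move=> t; exact: imbalance_le.
  by move=> t; exact: step_eq_or_imbalance_lt (respects_roles_traj t).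
by exists T => s le_s i; rewrite const.
Qed.

Lemma followers_zero_at_T_of_visits k :
  (forall t, ones (x t) < k) -> k <= n - #|[pred i | is_rej (ro i)]| ->
  (forall i t, is_fol (ro i) -> exists s, t <= s /\ u s = i) ->
  followers_zero_at_T ro x.
Proof.
move=> below_k le_k visits.
have [T0 settled_T0] := traj_settles.
have ex_settled : exists t, `[< settled x t >] by exists T0; apply/asboolP.
case: (ex_minnP ex_settled) => T /asboolP settled_T minT.
exists T; split => // [t /asboolP /minT //|].
apply: (stable_followers_false (respects_roles_traj T) _ (below_k T) le_k) => i fi.
have [s [le_s u_s]] := visits i T fi.
have x_s : x s = x T by apply/funext => j; exact: settled_T.
have x_Ss : x s.+1 = step ro (x s) (u s) by [].
by have := settled_T s.+1 (leqW le_s) i; rewrite x_Ss u_s /step eqxx x_s.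
Qed.

End Trajectory.

Fixpoint words (T : Type) (A : seq T) (N : nat) : seq (seq T) :=
  if N is N'.+1 then [seq a :: s | a <- A, s <- words A N'] else [:: [::]].

Lemma size_words (T : Type) (A : seq T) N : size (words A N) = size A ^ N.
Proof. by elim: N => //= N IH; rewrite size_allpairs IH expnS. Qed.

Lemma mem_words (T : eqType) (A : seq T) N s :
  (s \in words A N) = (size s == N) && all (mem A) s.
Proof.
elim: N s => [|N IH] [|a s] //=.
  by apply/negbTE/allpairsP => -[[? ?] []].
rewrite eqSS; apply/allpairsP/and3P => [[[a' s'] [/= a'A]]|[size_s aA sA]].
  by rewrite IH => /andP[s'N s'A] [-> ->].
by exists (a, s); rewrite IH size_s.
Qed.

Definition avoiding_words n (j : 'I_n) t L : seq (seq 'I_n) :=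
  [seq s1 ++ s2 | s1 <- words (enum 'I_n) t, s2 <- words (enum (predC1 j)) L].

Lemma size_avoiding_words n (j : 'I_n) t L :
  size (avoiding_words j t L) = n ^ t * n.-1 ^ L.
Proof.
by rewrite size_allpairs !size_words size_enum_ord -cardE cardC1 card_ord.
Qed.

Lemma size_mem_avoiding_words n (j : 'I_n) t L s :
  s \in avoiding_words j t L -> size s = t + L.
Proof.
case/allpairsP => -[s1 s2] [/=].
by rewrite !mem_words => /andP[/eqP <- _] /andP[/eqP <- _] ->; rewrite size_cat.
Qed.

Lemma prefix_mem_avoiding_words n (j : 'I_n) t L (v : nat -> 'I_n) :
  (forall s, t <= s < t + L -> v s != j) ->
  [seq v s | s <- iota 0 (t + L)] \in avoiding_words j t L.
Proof.
move=> avoid; rewrite iotaD map_cat; apply: allpairs_f.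
  by rewrite mem_words size_map size_iota eqxx; apply/allP => a _; rewrite /= mem_enum.
rewrite mem_words size_map size_iota eqxx /=; apply/allP => _ /mapP [s + ->].
by rewrite /= mem_enum inE mem_iota add0n => /avoid.
Qed.

Local Open Scope ring_scope.
Local Open Scope classical_set_scope.

Lemma measure_bigsetU_le (d : measure_display) (T : ringOfSetsType d)
    (R : realFieldType) (mu : {content set T -> \bar R})
    (I : Type) (r : seq I) (F : I -> set T) :
  (forall i, measurable (F i)) ->
  (mu (\big[setU/set0]_(i <- r) F i) <= \sum_(i <- r) mu (F i))%E.
Proof.
move=> mF; elim: r => [|i r IH]; first by rewrite !big_nil measure0.
rewrite !big_cons; apply: le_trans (measureU2 _ _ _) _ => //.
  exact: bigsetU_measurable.
exact: leeD2l.
Qed.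

Lemma eq0_le_geometric (R : realType) (x : \bar R) (C q : R) :
  (0 <= x)%E -> 0 <= q < 1 -> (forall L, (x <= (C * q ^+ L)%:E)%E) -> x = 0%E.
Proof.
move=> x_ge0 /andP[q_ge0 q_lt1] le_x; apply/eqP; rewrite eq_le x_ge0 andbT.
have x_fin : x \is a fin_num by rewrite ge0_fin_numE // (le_lt_trans (le_x 0)) ?ltey.
rewrite -(fineK x_fin) lee_fin.
apply: (@cvgr_to_ge _ eventually _ _ (fun L => C * q ^+ L)).
  rewrite -[X in _ --> X](mulr0 C); apply: cvgMl_tmp.
  by apply: cvg_expr; rewrite ger0_norm.
by apply: nearW => L; rewrite -lee_fin fineK.
Qed.

Section Visits.
Variables (R : realType) (d : measure_display) (Om : measurableType d).
Variables (P : probability Om R) (n : nat) (ro : 'I_n -> role).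
Variables (B : 'I_n -> Om -> bool) (U : nat -> Om -> 'I_n).
Hypothesis cyl_measurable : forall b s, measurable (cyl ro B U b s).
Let m := #|[pred i | is_fol (ro i)]|.
Hypothesis cyl_mass : forall b s, P (cyl ro B U b s) =
  ((2%:R^-1) ^+ m * (n%:R^-1) ^+ size s)%:E.

(* Ranging over all of [{ffun 'I_n -> bool}] overcounts the initial opinions
   by a factor [2 ^ (n - m)], which is harmless: only the decay in [L] matters. *)
Definition avoid_cover (j : 'I_n) t L : set Om :=
  \big[setU/set0]_(f : {ffun 'I_n -> bool})
    \big[setU/set0]_(s <- avoiding_words j t L) cyl ro B U f s.

Lemma measurable_avoid_cover j t L : measurable (avoid_cover j t L).
Proof. by do 2 apply: bigsetU_measurable => ? _; exact: cyl_measurable. Qed.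

Lemma avoid_sub_cover j t L :
  [set w | forall s, (t <= s < t + L)%N -> U s w != j] `<=` avoid_cover j t L.
Proof.
move=> w /= avoid; rewrite /avoid_cover -bigcup_seq.
exists [ffun i => B i w]; first by rewrite /= mem_index_enum.
rewrite -bigcup_seq; exists [seq U s w | s <- iota 0 (t + L)].
  exact: prefix_mem_avoiding_words.
by split=> [i _|]; rewrite ?ffunE // size_map size_iota.
Qed.

Lemma measure_avoid_cover_le j t L : (P (avoid_cover j t L) <=
  ((2 ^ n)%:R * 2%:R^-1 ^+ m * (n.-1%:R / n%:R) ^+ L)%:E)%E.
Proof.
pose c : R := 2%:R^-1 ^+ m * n%:R^-1 ^+ (t + L).
have inner (f : {ffun 'I_n -> bool}) :
    (P (\big[setU/set0]_(s <- avoiding_words j t L) cyl ro B U f s) <=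
     (c *+ (n ^ t * n.-1 ^ L)%N)%:E)%E.
  apply: le_trans (measure_bigsetU_le _ _ _) _ => [s|]; first exact: cyl_measurable.
  rewrite (eq_big_seq (fun=> c%:E)) => [|s /size_mem_avoiding_words size_s]; last first.
    by have := cyl_mass f s; rewrite size_s.
  by rewrite big_const_seq count_predT iter_addr_0 size_avoiding_words EFin_natmul.
apply: le_trans (measure_bigsetU_le _ _ _) _ => [f|].
  by apply: bigsetU_measurable => s _; exact: cyl_measurable.
apply: le_trans (lee_sum _ (fun f _ => inner f)) _.
rewrite sumEFin sumr_const card_ffun card_bool card_ord lee_fin le_eqVlt.
apply/orP; left.
have n_neq0 : n%:R != 0 :> R by rewrite pnatr_eq0 -lt0n (leq_ltn_trans _ (ltn_ord j)).
rewrite -mulrnA -[c *+ _]mulr_natr /c !natrM !natrX exprD !exprVn expr_div_n.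
apply/eqP; field.
by rewrite !expf_neq0.
Qed.

Lemma ae_visit j t : {ae P, forall w, exists s, (t <= s)%N /\ U s w = j}.
Proof.
have n_gt0 : (0 < n)%N := leq_ltn_trans (leq0n j) (ltn_ord j).
exists (\bigcap_L avoid_cover j t L); split.
- by apply: bigcapT_measurable => L; exact: measurable_avoid_cover.
- apply: (@eq0_le_geometric _ _ ((2 ^ n)%:R * 2%:R^-1 ^+ m) (n.-1%:R / n%:R)).
  + exact: measure_ge0.
  + rewrite divr_ge0 ?ler0n //= ltr_pdivrMr ?ltr0n // mul1r ltr_nat; lia.
  + move=> L; apply: le_trans (measure_avoid_cover_le j t L).
    apply: le_measure; rewrite ?inE; last by move=> w; apply.
      by apply: bigcapT_measurable => L'; exact: measurable_avoid_cover.
    exact: measurable_avoid_cover.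
- move=> w /= no_visit L _; apply: avoid_sub_cover => s /andP[le_s _].
  by apply/eqP => U_s; apply: no_visit; exists s.
Qed.

End Visits.

Theorem lemma7 (R : realType) (d : measure_display) (Om : measurableType d)
  (P : probability Om R) (n k : nat) (ro : 'I_n -> role)
  (B : 'I_n -> Om -> bool) (U : nat -> Om -> 'I_n) :
  (2 <= #|[pred i | is_fol (ro i)]|)%N ->
  (#|[pred i | is_con (ro i)]| < k)%N ->
  (k <= n - #|[pred i | is_rej (ro i)]|)%N ->
  (forall b s, measurable (cyl ro B U b s)) ->
  (forall b s, P (cyl ro B U b s) =
     ((2%:R^-1) ^+ #|[pred i | is_fol (ro i)]| * (n%:R^-1) ^+ size s)%:E) ->
  {ae P, forall w,
     (forall t, (ones (traj ro (init ro (fun i => B i w)) (fun t => U t w) t) < k)%N) ->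
     followers_zero_at_T ro (traj ro (init ro (fun i => B i w)) (fun t => U t w))}.
Proof.
move=> _ _ le_k cyl_measurable cyl_mass.
have visits : {ae P, forall w t j, exists s, (t <= s)%N /\ U s w = j}.
  apply: ae_foralln => t; apply: filter_forall => j.
  exact: ae_visit.
apply: filterS visits => w visits below_k.
by apply: (followers_zero_at_T_of_visits below_k le_k) => i t _; exact: visits.
Qed.
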